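(* Let $\mathfrak g$ be a pre-Lie algebra, $r\in\mathrm{Sym}^2(\mathfrak g)$ an $\mathfrak s$-matrix, and $\kappa\in\mathrm{Sym}^2(\mathfrak g)$ such that $r+t\kappa$ is an $\mathfrak s$-matrix for all $t\in\mathbb K$. Define $\pi:\mathfrak g^*\otimes\mathfrak g^*\to\mathfrak g^*$ by $\pi(\alpha,\beta)=\mathrm{ad}^*_{\kappa^\sharp(\alpha)}\beta-R^*_{\kappa^\sharp(\beta)}\alpha$. Then $\pi$ generates a one-parameter infinitesimal deformation of the phase space $(\mathfrak g^c,\mathfrak g^{*c},\omega_p)$ associated to $r$ (where $\mathfrak g^*$ carries the pre-Lie product $\cdot_r$): for every $t\in\mathbb K$, $\alpha\ast_t\beta=\alpha\cdot_r\beta+t\pi(\alpha,\beta)$ is a pre-Lie product on $\mathfrak g^*$ and $(\mathfrak g^c,(\mathfrak g^*,\ast_t)^c,\omega_p)$ is a phase space of $\mathfrak g^c$.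
   Context: A pre-Lie algebra is a finite-dimensional vector space over a field $\mathbb K$ of characteristic $0$ with product $\cdot$ satisfying $(x\cdot y)\cdot z-x\cdot(y\cdot z)=(y\cdot x)\cdot z-y\cdot(x\cdot z)$; its sub-adjacent Lie bracket is the commutator, written $[x,y]_{\mathfrak g}$ on $\mathfrak g$, and $\mathfrak g^c$ denotes this Lie algebra. Define $\langle L^*_x\alpha,y\rangle=-\langle\alpha,x\cdot y\rangle$, $\langle R^*_x\alpha,y\rangle=-\langle\alpha,y\cdot x\rangle$, $\mathrm{ad}^*_x=L^*_x-R^*_x$. For $r\in\mathrm{Sym}^2(\mathfrak g)$, $\langle r^\sharp(\alpha),\beta\rangle=r(\alpha,\beta)$; for $r=\sum_ia_i\otimes b_i$, $[r,r]=-\sum a_i\cdot a_j\otimes b_i\otimes b_j+\sum a_i\otimes b_i\cdot a_j\otimes b_j+\sum a_i\otimes a_j\otimes[b_i,b_j]_{\mathfrak g}$; $r$ is an $\mathfrak s$-matrix if $[r,r]=0$. Set $\alpha\cdot_r\beta=\mathrm{ad}^*_{r^\sharp(\alpha)}\beta-R^*_{r^\sharp(\beta)}\alpha$ (a pre-Lie product on $\mathfrak g^*$ when $r$ is an $\mathfrak s$-matrix). Given a pre-Lie product $\ast$ on $\mathfrak g^*$, with commutator $[\alpha,\beta]_\ast=\alpha\ast\beta-\beta\ast\alpha$ and $L^*_\alpha:\mathfrak g\to\mathfrak g$ defined by $\langle L^*_\alpha x,\beta\rangle=-\langle x,\alpha\ast\beta\rangle$, we say $(\mathfrak g^c,(\mathfrak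 g^*,\ast)^c,\omega_p)$ is a phase space of $\mathfrak g^c$ if the bracket $[x+\alpha,y+\beta]_p=[\alpha,\beta]_\ast+L^*_x\beta-L^*_y\alpha+L^*_\alpha y-L^*_\beta x+[x,y]_{\mathfrak g}$ is a Lie bracket on $\mathfrak g\oplus\mathfrak g^*$ for which $\omega_p(x+\alpha,y+\beta)=\langle\alpha,y\rangle-\langle x,\beta\rangle$ is a $2$-cocycle, i.e. $\omega_p([u,v]_p,w)+\omega_p([v,w]_p,u)+\omega_p([w,u]_p,v)=0$. *)

From mathcomp Require Import all_boot all_order all_algebra.
Set Implicit Arguments. Unset Strict Implicit. Unset Printing Implicit Defensive.
Import GRing.Theory.
Local Open Scope ring_scope.

(* Conventions: the n-dimensional space g is modelled as 'rV[K]_n (coordinates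
   in a fixed basis e_0..e_{n-1}); its dual g^* is modelled as 'rV[K]_n too
   (coordinates in the dual basis), with the pairing <alpha, x> = sum_i alpha_i x_i.
   An element of Sym^2(g) is a symmetric n x n matrix r, r = sum_{i,j} r_ij e_i (x) e_j. *)

Section Defs.
Variables (K : fieldType) (n : nat).
Notation V := 'rV[K]_n.

Definition ev (j : 'I_n) : V := delta_mx 0 j.

Definition pair (alpha x : V) : K := \sum_i alpha 0 i * x 0 i.

Definition bilinear_op (W : lmodType K) (op : W -> W -> W) : Prop :=
  (forall (a : K) (x y z : W), op (a *: x + y) z = a *: op x z + op y z) /\
  (forall (a : K) (x y z : W), op z (a *: x + y) = a *: op z x + op z y).

Definition is_preLie (W : lmodType K) (op : W -> W -> W) : Prop :=
  bilinear_op op /\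
  forall x y z : W, op (op x y) z - op x (op y z) = op (op y x) z - op y (op x z).

Variable mul : V -> V -> V.

Definition brg (x y : V) : V := mul x y - mul y x.

Definition Lstar (x alpha : V) : V := \row_j (- pair alpha (mul x (ev j))).
Definition Rstar (x alpha : V) : V := \row_j (- pair alpha (mul (ev j) x)).
Definition adstar (x alpha : V) : V := Lstar x alpha - Rstar x alpha.

Definition sharp (r : 'M[K]_n) (alpha : V) : V := alpha *m r.

(* coefficient of x (x) y (x) z at the basis element e_p (x) e_q (x) e_s *)
Definition t3 (x y z : V) (p q s : 'I_n) : K := x 0 p * y 0 q * z 0 s.

(* [r,r] for r = sum_{(i,j)} a_{ij} (x) b_{ij} with a_{ij} = e_i, b_{ij} = r_ij e_j,
   given by its coefficient at e_p (x) e_q (x) e_s *)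
Definition rr (r : 'M[K]_n) (p q s : 'I_n) : K :=
  \sum_i \sum_j \sum_k \sum_l
    (let a1 := ev i in let b1 := r i j *: ev j in
     let a2 := ev k in let b2 := r k l *: ev l in
     - t3 (mul a1 a2) b1 b2 p q s
     + t3 a1 (mul b1 a2) b2 p q s
     + t3 a1 a2 (brg b1 b2) p q s).

Definition s_matrix (r : 'M[K]_n) : Prop := forall p q s, rr r p q s = 0.

Definition dot_r (r : 'M[K]_n) (alpha beta : V) : V :=
  adstar (sharp r alpha) beta - Rstar (sharp r beta) alpha.

Variable ast : V -> V -> V.

Definition dLstar (alpha x : V) : V := \row_j (- pair (ast alpha (ev j)) x).

Definition padd (u v : V * V) : V * V := (u.1 + v.1, u.2 + v.2).
Definition pscale (a : K) (u : V * V) : V * V := (a *: u.1, a *: u.2).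

Definition brp (u v : V * V) : V * V :=
  let: (x, alpha) := u in let: (y, beta) := v in
  (dLstar alpha y - dLstar beta x + brg x y,
   (ast alpha beta - ast beta alpha) + Lstar x beta - Lstar y alpha).

Definition omega_p (u v : V * V) : K := pair u.2 v.1 - pair v.2 u.1.

Definition is_Lie_bracket (b : V * V -> V * V -> V * V) : Prop :=
  (forall (a : K) u v w, b (padd (pscale a u) v) w = padd (pscale a (b u w)) (b v w)) /\
  (forall (a : K) u v w, b w (padd (pscale a u) v) = padd (pscale a (b w u)) (b w v)) /\
  (forall u, b u u = (0, 0)) /\
  (forall u v w, padd (b u (b v w)) (padd (b v (b w u)) (b w (b u v))) = (0, 0)).

Definition phase_space : Prop :=
  is_Lie_bracket brp /\
  forall u v w, omega_p (brp u v) w + omega_p (brp v w) u + omega_p (brp w u) v = 0.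

End Defs.

From mathcomp Require Import all_boot all_order all_algebra ring.
Import GRing.Theory.
Local Open Scope ring_scope.
Set Implicit Arguments. Unset Strict Implicit. Unset Printing Implicit Defensive.

(* For a symmetric s-matrix R, evaluating the coefficients of [R,R] on three
   covectors shows that R^sharp maps the product ._R on g^* to the product of g;
   this makes ._R pre-Lie.  The bracket of
   g (+) g^* built from ._R is the semidirect-product bracket of g^c acting on
   g^* by L^*, transported along the shear x + alpha |-> (x + R^sharp alpha) + alpha;
   the semidirect bracket is Lie with omega_p a 2-cocycle, and the symmetry of R
   makes the shear compatible with omega_p.  Finally ._r + t pi = ._(r + t kappa),
   and r + t kappa is a symmetric s-matrix for every t. *)

Section Pairing.
Variables (K : fieldType) (n : nat).
Implicit Types (a b w : 'rV[K]_n) (c : K).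

Lemma pairC a w : pair a w = pair w a.
Proof. by apply: eq_bigr => i _; rewrite mulrC. Qed.

Lemma pair_is_scalar w : scalar (fun a => pair a w).
Proof.
move=> c a b; rewrite /pair mulr_sumr -big_split /=.
by apply: eq_bigr => i _; rewrite !mxE mulrDl mulrA.
Qed.

Lemma pair0l w : pair 0 w = 0.
Proof. by rewrite /pair big1 // => i _; rewrite mxE mul0r. Qed.

Lemma pairDl a b w : pair (a + b) w = pair a w + pair b w.
Proof. by have := pair_is_scalar w 1 a b; rewrite scale1r mul1r. Qed.

Lemma pairZl c a w : pair (c *: a) w = c * pair a w.
Proof. by have := pair_is_scalar w c a 0; rewrite !addr0 pair0l addr0. Qed.

Lemma pairNl a w : pair (- a) w = - pair a w.
Proof. by rewrite -scaleN1r pairZl mulN1r. Qed.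

Lemma pairBl a b w : pair (a - b) w = pair a w - pair b w.
Proof. by rewrite pairDl pairNl. Qed.

Lemma pair0r w : pair w 0 = 0.
Proof. by rewrite pairC pair0l. Qed.

Lemma pairDr a b w : pair w (a + b) = pair w a + pair w b.
Proof. by rewrite !(pairC w) pairDl. Qed.

Lemma pairZr c a w : pair w (c *: a) = c * pair w a.
Proof. by rewrite !(pairC w) pairZl. Qed.

Lemma pairNr a w : pair w (- a) = - pair w a.
Proof. by rewrite !(pairC w) pairNl. Qed.

Lemma pairBr a b w : pair w (a - b) = pair w a - pair w b.
Proof. by rewrite !(pairC w) pairBl. Qed.

Lemma pair_ev a j : pair a (ev K j) = a 0 j.
Proof.
rewrite /pair (bigD1 j) //= big1 ?addr0; first by rewrite mxE !eqxx mulr1.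
by move=> i /negbTE ij; rewrite mxE ij andbF mulr0.
Qed.

Lemma pair_ext a b : (forall w, pair a w = pair b w) -> a = b.
Proof. by move=> eq_ab; apply/rowP => j; rewrite -!pair_ev eq_ab. Qed.

Lemma pair_sharp (R : 'M[K]_n) : R^T = R -> forall a b, pair a (sharp R b) = pair b (sharp R a).
Proof.
have pair_mx a' b' : pair a' b' = (a' *m b'^T) 0 0.
  by rewrite mxE; apply: eq_bigr => i _; rewrite mxE.
by move=> symR a b; rewrite (pairC b) !pair_mx /sharp trmx_mul symR mulmxA.
Qed.

Section Scalar.
Variables (f : 'rV[K]_n -> K) (f_scalar : scalar f).

Lemma scalar_fun0 : f 0 = 0.
Proof.
have := f_scalar 1 0 0; rewrite scaler0 addr0 mul1r => f0_twice.
by apply: (addrI (f 0)); rewrite addr0 -f0_twice.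
Qed.

Lemma scalar_funZ c w : f (c *: w) = c * f w.
Proof. by rewrite -[c *: w]addr0 f_scalar scalar_fun0 addr0. Qed.

Lemma scalar_row_expand w : f w = \sum_j w 0 j * f (ev K j).
Proof.
rewrite {1}(row_sum_delta w); elim/big_rec2: _ => [|i y1 y2 _ <-]; first exact: scalar_fun0.
by rewrite f_scalar.
Qed.

Lemma sum_row_scalar (M : 'M[K]_n) i : \sum_j f (M i j *: ev K j) = f (row i M).
Proof.
by rewrite (scalar_row_expand (row i M)); apply: eq_bigr => j _; rewrite scalar_funZ mxE.
Qed.

End Scalar.

Lemma sum2_row_scalar (f : 'rV[K]_n -> 'rV[K]_n -> K) (M : 'M[K]_n) i k :
  (forall v, scalar (f^~ v)) -> (forall u, scalar (f u)) ->
  \sum_j \sum_l f (M i j *: ev K j) (M k l *: ev K l) = f (row i M) (row k M).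
Proof.
move=> f_scalar_l f_scalar_r; rewrite -(sum_row_scalar (f_scalar_l _)).
by apply: eq_bigr => j _; rewrite sum_row_scalar.
Qed.

Lemma sum_ev_coord p (F : 'I_n -> K) : \sum_i ev K i 0 p * F i = F p.
Proof.
rewrite (bigD1 p) //= big1 ?addr0; first by rewrite mxE !eqxx mul1r.
by move=> i /negbTE ip; rewrite mxE eq_sym ip andbF mul0r.
Qed.

Lemma pair_row_scalar (g : 'rV[K]_n -> K) w : scalar g -> pair (\row_j g (ev K j)) w = g w.
Proof.
move=> g_scalar; rewrite (scalar_row_expand g_scalar) pairC.
by apply: eq_bigr => j _; rewrite mxE.
Qed.

End Pairing.

Section Bilinear.
Variables (K : fieldType) (n : nat) (op : 'rV[K]_n -> 'rV[K]_n -> 'rV[K]_n).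
Hypothesis op_bil : bilinear_op op.

Lemma opDl x y z : op (x + y) z = op x z + op y z.
Proof. by rewrite -{1}[x]scale1r op_bil.1 scale1r. Qed.

Lemma opDr x y z : op z (x + y) = op z x + op z y.
Proof. by rewrite -{1}[x]scale1r op_bil.2 scale1r. Qed.

Lemma op0l z : op 0 z = 0.
Proof. by apply: (addrI (op 0 z)); rewrite addr0 -opDl addr0. Qed.

Lemma op0r z : op z 0 = 0.
Proof. by apply: (addrI (op z 0)); rewrite addr0 -opDr addr0. Qed.

Lemma opZl a x z : op (a *: x) z = a *: op x z.
Proof. by rewrite -[a *: x]addr0 op_bil.1 op0l addr0. Qed.

Lemma opZr a x z : op z (a *: x) = a *: op z x.
Proof. by rewrite -[a *: x]addr0 op_bil.2 op0r addr0. Qed.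

Lemma opNl x z : op (- x) z = - op x z.
Proof. by rewrite -scaleN1r opZl scaleN1r. Qed.

Lemma opNr x z : op z (- x) = - op z x.
Proof. by rewrite -scaleN1r opZr scaleN1r. Qed.

Lemma opBl x y z : op (x - y) z = op x z - op y z.
Proof. by rewrite opDl opNl. Qed.

Lemma opBr x y z : op z (x - y) = op z x - op z y.
Proof. by rewrite opDr opNr. Qed.

Lemma pair_dLstar a x b : pair (dLstar op a x) b = - pair (op a b) x.
Proof.
rewrite (pair_row_scalar (g := fun b => - pair (op a b) x)) // => c u v.
by rewrite op_bil.2 pairDl pairZl; ring.
Qed.

End Bilinear.

Lemma preLie_assocE (K : fieldType) (W : lmodType K) (op : W -> W -> W) :
  is_preLie op -> forall x y z, op (op x y) z = op x (op y z) + op (op y x) z - op y (op x z).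
Proof. by move=> [_ preLie_op] x y z; rewrite -addrA -preLie_op addrC subrK. Qed.

Ltac expand op_bil := rewrite ?(opDl op_bil, opDr op_bil, opBl op_bil, opBr op_bil,
  opNl op_bil, opNr op_bil, opZl op_bil, opZr op_bil, op0l op_bil, op0r op_bil,
  pairDl, pairDr, pairBl, pairBr, pairNl, pairNr, pairZl, pairZr, pair0l, pair0r).

Section PreLieDual.
Variables (K : fieldType) (n : nat) (mul : 'rV[K]_n -> 'rV[K]_n -> 'rV[K]_n).
Hypothesis mul_bil : bilinear_op mul.
Implicit Types (x a b w : 'rV[K]_n) (R S : 'M[K]_n).

Lemma pair_Lstar x a w : pair (Lstar mul x a) w = - pair a (mul x w).
Proof.
rewrite (pair_row_scalar (g := fun w => - pair a (mul x w))) // => c u v.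
by expand mul_bil; ring.
Qed.

Lemma pair_Rstar x a w : pair (Rstar mul x a) w = - pair a (mul w x).
Proof.
rewrite (pair_row_scalar (g := fun w => - pair a (mul w x))) // => c u v.
by expand mul_bil; ring.
Qed.

Lemma pair_dot_r R a b w : pair (dot_r mul R a b) w =
  - pair b (mul (sharp R a) w) + pair b (mul w (sharp R a)) + pair a (mul w (sharp R b)).
Proof. by rewrite /dot_r /adstar !pairBl pair_Lstar !pair_Rstar; ring. Qed.

Lemma dot_r_bilinear R : bilinear_op (dot_r mul R).
Proof.
split=> c a b d; apply: pair_ext => w; rewrite [LHS]pair_dot_r [RHS]pairDl pairZl !pair_dot_r;
  by rewrite /sharp ?mulmxDl -?scalemxAl; expand mul_bil; ring.
Qed.

Lemma dot_rDZ R S t a b :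
  dot_r mul (R + t *: S) a b = dot_r mul R a b + t *: dot_r mul S a b.
Proof.
apply: pair_ext => w; rewrite [LHS]pair_dot_r [RHS]pairDl pairZl !pair_dot_r.
by rewrite /sharp !mulmxDr -!scalemxAr; expand mul_bil; ring.
Qed.

Lemma dot_r_comm R a b :
  dot_r mul R a b - dot_r mul R b a = Lstar mul (sharp R a) b - Lstar mul (sharp R b) a.
Proof. by apply: pair_ext => w; rewrite [LHS]pairBl [RHS]pairBl !pair_dot_r !pair_Lstar; ring. Qed.

Section SMatrix.
Variable R : 'M[K]_n.
Hypothesis R_sym : R^T = R.

Lemma R_entry_sym i j : R i j = R j i.
Proof. by rewrite -[R in LHS]R_sym mxE. Qed.

Lemma rr_coefE p q s : rr mul R p q s =
  - mul (row q R) (row s R) 0 p + mul (row p R) (row s R) 0 q + brg mul (row p R) (row q R) 0 s.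
Proof.
pose F i k (u v : 'rV[K]_n) := - (mul (ev K i) (ev K k) 0 p * u 0 q * v 0 s)
  + ev K i 0 p * mul u (ev K k) 0 q * v 0 s + ev K i 0 p * ev K k 0 q * brg mul u v 0 s.
(* The sums over j and l contract R i j *: ev j into row i R; over i and k
   what remains are Kronecker deltas and, by symmetry of R, row contractions. *)
transitivity (\sum_i \sum_k F i k (row i R) (row k R)).
{ apply: eq_bigr => i _; rewrite exchange_big; apply: eq_bigr => k _.
  rewrite -(sum2_row_scalar (f := F i k)); first by apply: eq_bigr => j _; apply: eq_bigr.
  all: by move=> ? c x y; rewrite /F /brg; expand mul_bil; rewrite !mxE; ring. }
rewrite /F; do 2 under eq_bigr do rewrite big_split /=; rewrite !big_split /=.
congr (_ + _ + _).
- rewrite -(sum2_row_scalar (f := fun u v => - mul u v 0 p)); last 2 first.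
  1-2: by move=> ? c x y; expand mul_bil; rewrite !mxE; ring.
  apply: eq_bigr => i _; apply: eq_bigr => k _.
  by expand mul_bil; rewrite !mxE (R_entry_sym i) (R_entry_sym k); ring.
- under eq_bigr do under eq_bigr do rewrite -mulrA.
  under eq_bigr do rewrite -mulr_sumr; rewrite sum_ev_coord.
  rewrite -(sum_row_scalar (f := fun v => mul (row p R) v 0 q)) => [|c x y]; last first.
    by expand mul_bil; rewrite !mxE.
  by apply: eq_bigr => k _; expand mul_bil; rewrite !mxE R_entry_sym mulrC.
- under eq_bigr do under eq_bigr do rewrite -mulrA.
  by under eq_bigr do rewrite -mulr_sumr; rewrite !sum_ev_coord.
Qed.

Lemma pair_sharpl a b : pair (sharp R a) b = pair a (sharp R b).
Proof. by rewrite pairC pair_sharp. Qed.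

Hypothesis R_smat : s_matrix mul R.

Lemma s_matrix_pair a b c : pair c (brg mul (sharp R a) (sharp R b)) =
  pair a (mul (sharp R b) (sharp R c)) - pair b (mul (sharp R a) (sharp R c)).
Proof.
pose G a b c := - pair a (mul (sharp R b) (sharp R c))
  + pair b (mul (sharp R a) (sharp R c)) + pair c (brg mul (sharp R a) (sharp R b)).
suff G0 : G a b c = 0 by apply/eqP; rewrite -subr_eq0; apply/eqP; rewrite -G0 /G; ring.
have G_basis p q s : G (ev K p) (ev K q) (ev K s) = 0.
  by rewrite /G /sharp -!rowE !(pairC (ev K _)) !pair_ev -rr_coefE R_smat.
have sharpDZ d x y : sharp R (d *: x + y) = d *: sharp R x + sharp R y.
  by rewrite /sharp mulmxDl scalemxAl.
rewrite (scalar_row_expand (f := fun a => G a b c)) => [|d x y]; last first.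
  by rewrite /G /brg sharpDZ; expand mul_bil; ring.
apply: big1 => p _.
rewrite (scalar_row_expand (f := fun b => G (ev K p) b c)) => [|d x y]; last first.
  by rewrite /G /brg sharpDZ; expand mul_bil; ring.
rewrite big1 ?mulr0 // => q _.
rewrite (scalar_row_expand (f := G (ev K p) (ev K q))) => [|d x y].
  by rewrite big1 ?mulr0 // => s _; rewrite G_basis mulr0.
by rewrite /G /brg sharpDZ; expand mul_bil; ring.
Qed.

Lemma sharp_dot_r a b : sharp R (dot_r mul R a b) = mul (sharp R a) (sharp R b).
Proof.
apply: pair_ext => w; rewrite pair_sharpl pair_dot_r (pairC _ w).
by have := s_matrix_pair a w b; rewrite /brg pairBr => /eqP; rewrite subr_eq => /eqP ->; ring.
Qed.

Lemma dot_r_preLie : is_preLie mul -> is_preLie (dot_r mul R).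
Proof.
move=> mul_preLie; split=> [|a b c]; first exact: dot_r_bilinear.
apply: pair_ext => w; rewrite [LHS]pairBl [RHS]pairBl !pair_dot_r !sharp_dot_r.
set x := sharp R a; set y := sharp R b; set z := sharp R c.
rewrite !(preLie_assocE mul_preLie x) (preLie_assocE mul_preLie y w).
by rewrite !(preLie_assocE mul_preLie w); expand mul_bil; ring.
Qed.

End SMatrix.
End PreLieDual.

Section PhaseSpace.
Variables (K : fieldType) (n : nat) (mul : 'rV[K]_n -> 'rV[K]_n -> 'rV[K]_n).
Hypothesis mul_preLie : is_preLie mul.
Let mul_bil : bilinear_op mul := mul_preLie.1.
Implicit Types (R : 'M[K]_n) (u v w : 'rV[K]_n * 'rV[K]_n).

Definition semidirect_bracket u v : 'rV[K]_n * 'rV[K]_n :=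
  (brg mul u.1 v.1, Lstar mul u.1 v.2 - Lstar mul v.1 u.2).

Lemma semidirect_bracket_linl c u v w :
  semidirect_bracket (padd (pscale c u) v) w =
  padd (pscale c (semidirect_bracket u w)) (semidirect_bracket v w).
Proof.
by congr (_, _); apply: pair_ext => p; rewrite /brg; expand mul_bil; rewrite ?pair_Lstar //;
  expand mul_bil; ring.
Qed.

Lemma semidirect_bracket_linr c u v w :
  semidirect_bracket w (padd (pscale c u) v) =
  padd (pscale c (semidirect_bracket w u)) (semidirect_bracket w v).
Proof.
by congr (_, _); apply: pair_ext => p; rewrite /brg; expand mul_bil; rewrite ?pair_Lstar //;
  expand mul_bil; ring.
Qed.

Lemma semidirect_bracket_alt u : semidirect_bracket u u = (0, 0).
Proof. by rewrite /semidirect_bracket /brg !subrr. Qed.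

Lemma semidirect_bracket_jacobi u v w :
  padd (semidirect_bracket u (semidirect_bracket v w))
    (padd (semidirect_bracket v (semidirect_bracket w u))
          (semidirect_bracket w (semidirect_bracket u v))) = (0, 0).
Proof.
case: u v w => [x a] [y b] [z g]; congr (_, _); apply: pair_ext => p; rewrite pair0l /=.
- rewrite !(pairC _ p) /brg; expand mul_bil.
  rewrite (preLie_assocE mul_preLie x y z) (preLie_assocE mul_preLie y z x).
  by rewrite (preLie_assocE mul_preLie z x y); expand mul_bil; ring.
- rewrite /brg; expand mul_bil; rewrite !pair_Lstar //; expand mul_bil; rewrite !pair_Lstar //.
  rewrite (preLie_assocE mul_preLie x y p) (preLie_assocE mul_preLie y z p).
  by rewrite (preLie_assocE mul_preLie z x p); expand mul_bil; ring.
Qed.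

Lemma semidirect_bracket_cocycle u v w :
  omega_p (semidirect_bracket u v) w + omega_p (semidirect_bracket v w) u
    + omega_p (semidirect_bracket w u) v = 0.
Proof.
case: u v w => [x a] [y b] [z g]; rewrite /omega_p /brg /=.
by expand mul_bil; rewrite !pair_Lstar //; rewrite !(pairC _ (mul _ _)); ring.
Qed.

Definition shear R u : 'rV[K]_n * 'rV[K]_n := (u.1 + sharp R u.2, u.2).
Definition unshear R u : 'rV[K]_n * 'rV[K]_n := (u.1 - sharp R u.2, u.2).

Lemma shearK R u : shear R (unshear R u) = u.
Proof. by case: u => x a; rewrite /shear /unshear subrK. Qed.

Lemma shear_lin R c u v : shear R (padd (pscale c u) v) = padd (pscale c (shear R u)) (shear R v).
Proof.
by congr (_, _); apply: pair_ext => p; rewrite /sharp mulmxDl -scalemxAl; expand mul_bil; ring.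
Qed.

Lemma unshear_lin R c u v :
  unshear R (padd (pscale c u) v) = padd (pscale c (unshear R u)) (unshear R v).
Proof.
by congr (_, _); apply: pair_ext => p; rewrite /sharp mulmxDl -scalemxAl; expand mul_bil; ring.
Qed.

Lemma unshearD R u v : unshear R (padd u v) = padd (unshear R u) (unshear R v).
Proof. by congr (_, _); apply: pair_ext => p; rewrite /sharp mulmxDl; expand mul_bil; ring. Qed.

Lemma unshear0 R : unshear R (0, 0) = (0, 0).
Proof. by rewrite /unshear /sharp mul0mx subrr. Qed.

Lemma omega_unshear R : R^T = R -> forall u w, omega_p (unshear R u) w = omega_p u (shear R w).
Proof.
move=> R_sym [x a] [y b]; rewrite /omega_p /=; expand mul_bil.
by rewrite (pair_sharp R_sym b a); ring.
Qed.

Lemma brp_dot_r R : R^T = R -> s_matrix mul R ->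
  forall u v, brp mul (dot_r mul R) u v = unshear R (semidirect_bracket (shear R u) (shear R v)).
Proof.
move=> R_sym R_smat [x a] [y b]; congr (_, _); apply: pair_ext => c /=.
- rewrite [LHS]pairDl !pairBl !(pair_dLstar (dot_r_bilinear mul_bil R)) !pair_dot_r //.
  rewrite (pair_sharpl R_sym) pairBl !pair_Lstar //; expand mul_bil; rewrite !(pairC _ c).
  have := s_matrix_pair mul_bil R_sym R_smat a b c.
  by rewrite /brg pairBr => /eqP; rewrite subr_eq => /eqP ->; ring.
- by rewrite dot_r_comm //; expand mul_bil; rewrite !pair_Lstar //; expand mul_bil; ring.
Qed.

Lemma phase_space_dot_r R : R^T = R -> s_matrix mul R -> phase_space mul (dot_r mul R).
Proof.
move=> R_sym R_smat; have brpE := brp_dot_r R_sym R_smat.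
split; [split; [|split; [|split]]|].
- by move=> c u v w; rewrite !brpE shear_lin semidirect_bracket_linl unshear_lin.
- by move=> c u v w; rewrite !brpE shear_lin semidirect_bracket_linr unshear_lin.
- by move=> u; rewrite brpE semidirect_bracket_alt unshear0.
- by move=> u v w; rewrite !brpE !shearK -!unshearD semidirect_bracket_jacobi unshear0.
- by move=> u v w; rewrite !brpE !omega_unshear //; apply: semidirect_bracket_cocycle.
Qed.

End PhaseSpace.

Section Transport.
Variables (K : fieldType) (n : nat) (mul : 'rV[K]_n -> 'rV[K]_n -> 'rV[K]_n).
Variables (f g : 'rV[K]_n -> 'rV[K]_n -> 'rV[K]_n).
Hypothesis f_eq_g : f =2 g.

Lemma is_preLie_eq2 : is_preLie f -> is_preLie g.
Proof.
move=> [[linl linr] preLie_f]; do ?split=> *; rewrite -!f_eq_g;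
  by [apply: linl | apply: linr | apply: preLie_f].
Qed.

Lemma phase_space_eq2 : phase_space mul f -> phase_space mul g.
Proof.
have dLstar_eq a x : dLstar g a x = dLstar f a x by apply/rowP => j; rewrite !mxE f_eq_g.
have brp_eq u v : brp mul g u v = brp mul f u v.
  by case: u v => [x a] [y b]; rewrite /brp !dLstar_eq !f_eq_g.
move=> [[linl [linr [alt jacobi]]] cocycle]; do ?split=> *; rewrite !brp_eq;
  by [apply: linl | apply: linr | apply: alt | apply: jacobi | apply: cocycle].
Qed.

End Transport.

Theorem proposition5p8 (K : fieldType) (n : nat)
    (mul : 'rV[K]_n -> 'rV[K]_n -> 'rV[K]_n) (r kappa : 'M[K]_n) :
  [pchar K] =i pred0 ->
  is_preLie mul ->
  r^T = r -> kappa^T = kappa ->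
  s_matrix mul r ->
  (forall t : K, s_matrix mul (r + t *: kappa)) ->
  let pi := fun alpha beta : 'rV[K]_n =>
    adstar mul (sharp kappa alpha) beta - Rstar mul (sharp kappa beta) alpha in
  forall t : K,
    let ast := fun alpha beta : 'rV[K]_n => dot_r mul r alpha beta + t *: pi alpha beta in
    is_preLie ast /\ phase_space mul ast.
Proof.
(* Neither the characteristic nor [s_matrix mul r] (the case t = 0) is needed. *)
move=> _ mul_preLie r_sym kappa_sym _ s_matrix_line pi t ast.
have rt_sym : (r + t *: kappa)^T = r + t *: kappa by rewrite linearD linearZ /= r_sym kappa_sym.
have ast_eq : dot_r mul (r + t *: kappa) =2 ast.
  by move=> a b; rewrite dot_rDZ //; apply: mul_preLie.1.
split.
- exact: is_preLie_eq2 ast_eq (dot_r_preLie mul_preLie.1 rt_sym (s_matrix_line t) mul_preLie).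
- exact: phase_space_eq2 ast_eq (phase_space_dot_r mul_preLie rt_sym (s_matrix_line t)).
Qed.
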